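(* Let $\mathcal{M}\subseteq\mathbb{N}_0$ and let $k=\min(\mathcal{M})$ if $\mathcal{M}\ne\varnothing$ and $k=0$ otherwise. Then $\lim_{i\to\infty}\mathcal{M}^i=\mathcal{M}_k$, where $\mathcal{M}_0=\varnothing$ and, for $k\ge1$, $\mathcal{M}_k=\{ip_k+j:\ i\in\mathbb{N}_0,\ k\le j\le 2k-1\}$ with $p_k=3k-1$.
   Context: A one-heap game is a set $\mathcal{M}\subseteq\mathbb{N}_0$ of moves; from position $x\in\mathbb{N}_0$ one may move to $y\in\mathbb{N}_0$ iff $x-y\in\mathcal{M}$. Misère play: a player who cannot move wins. If $0\in\mathcal{M}$, $P(\mathcal{M})=\varnothing$. Otherwise: a position is an N-position if it has no option or some option is a P-position; otherwise it is a P-position; $P(\mathcal{M})$ denotes the set of P-positions. $\mathcal{M}^\star=P(\mathcal{M})$, $\mathcal{M}^0=\mathcal{M}$, $\mathcal{M}^i=(\mathcal{M}^{i-1})^\star$, and $\lim_i\mathcal{M}^i$ is the pointwise limit: the set of $x$ with $x\in\mathcal{M}^i$ for all sufficiently large $i$, where every $x$ is eventually always in or eventually always out of $\mathcal{M}^i$. *)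

From mathcomp Require Import all_boot.
Set Implicit Arguments. Unset Strict Implicit. Unset Printing Implicit Defensive.

Definition nset := nat -> bool.

(* Given the table t of P-statuses of positions 0..x-1 (entry y is true iff y
   is a P-position), decide whether x is a P-position, assuming 0 \notin M
   (so every option y of x satisfies y < x).
   x is an N-position iff it has no option or some option is a P-position;
   otherwise it is a P-position. *)
Definition Pstep (M : nset) (t : seq bool) (x : nat) : bool :=
  has (fun y => M (x - y)) (iota 0 x) &&
  all (fun y => M (x - y) ==> ~~ nth false t y) (iota 0 x).

Fixpoint ptab (M : nset) (n : nat) : seq bool :=
  match n with
  | 0 => [::]
  | n'.+1 => let t := ptab M n' in rcons t (Pstep M t n')
  end.

(* P(M) = M^star: empty if 0 \in M, otherwise the set of P-positions. *)
Definition Pset (M : nset) : nset :=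
  fun x => ~~ M 0 && nth false (ptab M x.+1) x.

Definition Miter (M : nset) (i : nat) : nset := iter i Pset M.

Definition Mk (k : nat) (x : nat) : Prop :=
  1 <= k /\ exists i j, k <= j <= 2 * k - 1 /\ x = i * (3 * k - 1) + j.

Definition pointwise_limit (f : nat -> nset) (L : nat -> Prop) : Prop :=
  forall x, exists N, forall i, N <= i -> (f i x <-> L x).

(* For k >= 1 the set M_k is sum-free (its residues mod p_k lie in [k, 2k-1],
   and sums of two of them land in [2k, 3k-2] or, after one wrap, in
   [1, k-1]), while every x >= k outside M_k is a sum of two elements of
   M_k.  Hence M_k satisfies the P-position recurrence of the game M_k
   itself.  Since the status of x only looks at moves of size <= x, and the
   move to 0 never leads to a P-position (0 has no option), a game agreeing with
   M_k on [0, n) has P-set agreeing with M_k on [0, n].  As M = M^0 agrees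
   with M_k on [0, k], the iterate M^i agrees with M_k on [0, k + i].
   If instead 0 \in M, or M is empty, then M^1 is empty, and so are all
   later iterates. *)

From mathcomp Require Import all_boot.
From mathcomp Require Import zify.
Set Implicit Arguments. Unset Strict Implicit.

Definition Pcond (A S : nset) (x : nat) : bool :=
  has (fun y => A (x - y)) (iota 0 x) &&
  all (fun y => A (x - y) ==> ~~ S y) (iota 0 x).

Definition ppos (A : nset) (x : nat) : bool := nth false (ptab A x.+1) x.

Lemma size_ptab A n : size (ptab A n) = n.
Proof. by elim: n => //= n IH; rewrite size_rcons IH. Qed.

Lemma nth_ptab A n x : x < n -> nth false (ptab A n) x = ppos A x.
Proof.
elim: n => // n IH; rewrite ltnS leq_eqVlt => /orP [/eqP -> // | ltxn] /=.
by rewrite nth_rcons size_ptab ltxn IH.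
Qed.

Lemma ppos_rec A x : ppos A x = Pcond A (ppos A) x.
Proof.
rewrite /ppos /= nth_rcons size_ptab ltnn eqxx /Pstep /Pcond; congr (_ && _).
apply: eq_in_all => y; rewrite mem_iota add0n => /andP [_ ltyx].
by rewrite nth_ptab.
Qed.

Lemma ppos_unique A S n :
  (forall x, x <= n -> S x = Pcond A S x) ->
  forall x, x <= n -> ppos A x = S x.
Proof.
move=> recS x; elim/ltn_ind: x => x IH lexn.
rewrite ppos_rec recS //; congr (_ && _); apply: eq_in_all => y.
rewrite mem_iota add0n => /andP [_ ltyx]; rewrite IH //; lia.
Qed.

Lemma Pset_ppos A x : Pset A x = ~~ A 0 && ppos A x.
Proof. by []. Qed.

Lemma Pset_pred0 (A : nset) : A =1 pred0 -> Pset A =1 pred0.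
Proof.
move=> A0 x; rewrite Pset_ppos ppos_rec /Pcond.
suff -> : has (fun y => A (x - y)) (iota 0 x) = false by rewrite !andbF.
by apply/negbTE/hasPn => y _; rewrite A0.
Qed.

Lemma Miter_pred0 (A : nset) : A =1 pred0 -> forall i, Miter A i =1 pred0.
Proof. by move=> A0; elim => [|i IH] //=; apply: Pset_pred0. Qed.

Definition Mkb (k x : nat) : bool :=
  (0 < k) && (k <= x %% (3 * k - 1) <= 2 * k - 1).

Lemma MkbP k x : reflect (Mk k x) (Mkb k x).
Proof.
apply: (iffP idP) => [/andP [k_gt0 /andP [lekr lerk]] | [k_gt0 [i [j [/andP [lekj lejk] ->]]]]].
  by split => //; exists (x %/ (3 * k - 1)), (x %% (3 * k - 1)); rewrite lekr lerk -divn_eq.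
by rewrite /Mkb k_gt0 modnMDl modn_small ?lekj ?lejk //; lia.
Qed.

Lemma Mk0 x : ~ Mk 0 x.
Proof. by case. Qed.

Lemma Mkb_ge k x : Mkb k x -> k <= x.
Proof. by case/andP => _ /andP [lekr _]; apply: leq_trans lekr (leq_mod _ _). Qed.

Lemma Mkb_id k : 0 < k -> Mkb k k.
Proof. by move=> k_gt0; rewrite /Mkb k_gt0 modn_small ?leqnn /=; lia. Qed.

Lemma Mk_sumfree k y z : Mk k y -> Mk k z -> ~ Mk k (y + z).
Proof.
move=> [k_gt0 [i1 [j1 [bd1 ->]]]] [_ [i2 [j2 [bd2 ->]]]] [_ [i3 [j3 [bd3 E]]]].
have : 3 * k - 1 + 1 = 3 * k by lia.
move: (3 * k - 1) E => p E p1.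
case: (leqP i3 (i1 + i2)) => lti.
  have : i3 * p <= (i1 + i2) * p by rewrite leq_mul2r lti orbT.
  by rewrite mulnDl; lia.
have : (i1 + i2).+1 * p <= i3 * p by rewrite leq_mul2r lti orbT.
by rewrite mulSn mulnDl; lia.
Qed.

Lemma Mkb_decomp k x : 0 < k -> k <= x -> ~~ Mkb k x ->
  exists2 y, y < x & Mk k y /\ Mk k (x - y).
Proof.
rewrite /Mkb => k_gt0 lekx; rewrite k_gt0 /=.
have : 3 * k - 1 + 1 = 3 * k by lia.
have ltrp : x %% (3 * k - 1) < 3 * k - 1 by apply: ltn_pmod; lia.
have := divn_eq x (3 * k - 1).
move: (3 * k - 1) (x %/ _) (x %% _) ltrp => p q r ltrp Ex p1 Nr.
have [ltrk | ler2k] : r < k \/ 2 * k <= r by move: Nr; case: (leqP k r) => /=; lia.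
  (* borrow one period: (q + 1) p + r = (q p + 2k - 1) + (k + r) *)
  case: q Ex => [|q] Ex; first lia.
  exists (q * p + (2 * k - 1)); first by rewrite mulSn in Ex; lia.
  split; split => //; first by exists q, (2 * k - 1); split => //; lia.
  by exists 0, (k + r); rewrite mulSn in Ex; split; lia.
exists (q * p + k); first lia.
split; split => //; first by exists q, k; split => //; lia.
by exists 0, (r - k); split; lia.
Qed.

Lemma Mkb_Pcond k (A : nset) n x : 0 < k -> k < n ->
  (forall y, y < n -> A y = Mkb k y) -> x <= n ->
  Mkb k x = Pcond A (Mkb k) x.
Proof.
move=> k_gt0 ltkn A_Mk lexn; rewrite /Pcond.
have Mkb0 : Mkb k 0 = false by apply/negbTE/negP => /Mkb_ge; lia.
case Mx: (Mkb k x).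
  have lekx := Mkb_ge Mx.
  apply/esym/andP; split.
    apply/hasP; exists (x - k); first by rewrite mem_iota; lia.
    by rewrite subKn // A_Mk // Mkb_id.
  apply/allP => -[|y]; first by rewrite Mkb0 implybT.
  rewrite mem_iota add0n => /andP [_ ltyx]; rewrite A_Mk; last lia.
  apply/implyP => /MkbP My; apply/negP => /MkbP My'.
  by apply: (Mk_sumfree My' My); rewrite subnKC; [apply/MkbP | lia].
have [ltxk | lekx] := ltnP x k.
  apply/esym/negbTE; rewrite negb_and; apply/orP; left.
  apply/hasPn => y _; rewrite A_Mk; last lia.
  by apply/negP => /Mkb_ge; lia.
have [y ltyx [My Mxy]] := Mkb_decomp k_gt0 lekx (negbT Mx).
apply/esym/negbTE; rewrite negb_and; apply/orP; right.
apply/allPn; exists y; first by rewrite mem_iota.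
move/MkbP: My => My; move/MkbP: Mxy => Mxy.
by rewrite A_Mk ?My ?Mxy //; have := Mkb_ge My; lia.
Qed.

Lemma Pset_Mk k (A : nset) n x : 0 < k -> k < n ->
  (forall y, y < n -> A y = Mkb k y) -> x <= n -> Pset A x = Mkb k x.
Proof.
move=> k_gt0 ltkn A_Mk lexn.
have A0 : A 0 = false by rewrite A_Mk; [apply/negbTE/negP => /Mkb_ge | ]; lia.
rewrite Pset_ppos A0 /=; apply: (ppos_unique (S := Mkb k)) lexn => y leyn.
exact: Mkb_Pcond leyn.
Qed.

Lemma Miter_Mk (M : nset) k : 0 < k -> M k -> (forall x, M x -> k <= x) ->
  forall i x, x <= k + i -> Miter M i x = Mkb k x.
Proof.
move=> k_gt0 Mk_in Mk_min; elim => [|i IH] x.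
  rewrite addn0 leq_eqVlt => /orP [/eqP -> | ltxk] /=; first by rewrite Mk_in Mkb_id.
  case Mx: (M x); first by have := Mk_min x Mx; lia.
  by apply/esym/negbTE/negP => /Mkb_ge; lia.
rewrite addnS => lex; apply: (Pset_Mk k_gt0 _ _ lex); first lia.
by move=> y; rewrite ltnS; apply: IH.
Qed.

Theorem corollary7 (M : nset) (k : nat)
  (hk : ((forall x, M x = false) /\ k = 0) \/ (M k /\ forall x, M x -> k <= x)) :
  pointwise_limit (Miter M) (Mk k).
Proof.
case: hk => [[M0 ->] | [Mk_in Mk_min]].
  by move=> x; exists 0 => i _; rewrite Miter_pred0 //; split=> // /Mk0.
case: (posnP k) => [k0 | k_gt0].
  have M1_0 : Miter M 1 =1 pred0 by move=> y; rewrite /= /Pset -k0 Mk_in.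
  move=> x; exists 1 => -[// | i] _; subst k.
  rewrite /Miter -addn1 iterD -/(Miter (Miter M 1) i) Miter_pred0 //.
  by split => // /Mk0.
move=> x; exists x => i lexi.
by rewrite (Miter_Mk k_gt0 Mk_in Mk_min (i := i)); [split => /MkbP | lia].
Qed.
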